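(* Let $\Sigma\subseteq\mathcal L_\Diamond$ be finite and closed under subformulas and let $\mathcal I$ be a finite weak $\Sigma$-quasimodel such that for every deterministic weak $\mathcal L_\Diamond$-quasimodel $\mathcal A$ the relation $\rightharpoonup\ \subseteq|\mathcal I|\times|\mathcal A|$ is a surjective dynamic simulation. Let $P=\{w\in|\mathcal I|:\ \not\vdash\mathrm{Sim}(w)\}$ be the set of possible moments. Then $P$ is upward closed in $(|\mathcal I|,\preccurlyeq_{\mathcal I})$, and $S_{\mathcal I}\cap(P\times P)$ is serial on $P$: for every $w\in P$ there is $v\in P$ with $w\,S_{\mathcal I}\,v$.
   Context: $\mathcal L_\Diamond$ is the propositional language with $\bot,\wedge,\vee,\to$ and unary modalities $\bigcirc$, $\Diamond$. ${\sf ITL}^0_\Diamond$ is axiomatized by all intuitionistic propositional tautologies, $\neg\bigcirc\bot$, $\bigcirc\varphi\wedge\bigcirc\psi\to\bigcirc(\varphi\wedge\psi)$, $\bigcirc(\varphi\vee\psi)\to\bigcirc\varphi\vee\bigcirc\psi$, $\bigcirc(\varphi\to\psi)\to(\bigcirc\varphi\to\bigcirc\psi)$, $\varphi\vee\bigcirc\Diamond\varphi\to\Diamond\varphi$, closed under modus ponens and the rules $\varphi/\bigcirc\varphi$, $(\varphi\to\psi)/(\Diamond\varphi\to\Diamond\psi)$, $(\bigcirc\varphi\to\varphi)/(\Diamond\varphi\to\varphi)$; $\vdash\varphi$ means $\varphi\in{\sf ITL}^0_\Diamond$. Types: a $\Sigma$-type is a pair $\Phi=(\Phi^-;\Phi^+)$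 of subsets of $\Sigma$ with $\Phi^-\cap\Phi^+=\varnothing$, $\Phi^-\cup\Phi^+=\Sigma$, $\bot\notin\Phi^+$, $\wedge,\vee$ in $\Phi^+$ behaving classically, ($\varphi\to\psi\in\Phi^+\Rightarrow\varphi\in\Phi^-$ or $\psi\in\Phi^+$), ($\Diamond\varphi\in\Phi^-\Rightarrow\varphi\in\Phi^-$). $\Phi\preccurlyeq_T\Psi$ iff $\Phi^+\subseteq\Psi^+$; $\Phi\subseteq_T\Psi$ iff $\Phi^-\subseteq\Psi^-$, $\Phi^+\subseteq\Psi^+$. $\Phi\,S_T\,\Psi$ iff: $\bigcirc\varphi\in\Phi^+\Rightarrow\varphi\in\Psi^+$; $\bigcirc\varphi\in\Phi^-\Rightarrow\varphi\in\Psi^-$; ($\Diamond\varphi\in\Phi^+$, $\varphi\in\Phi^-$)$\Rightarrow\Diamond\varphi\in\Psi^+$; $\Diamond\varphi\in\Phi^-\Rightarrow\Diamond\varphi\in\Psi^-$. A $\Sigma$-labelled frame is $(W,\preccurlyeq,\ell)$, $\preccurlyeq$ a partial order, $\ell$ mapping to $\Sigma$-types, monotone w.r.t. $\preccurlyeq_T$, and if $\varphi\to\psi\in\ell^-(w)$ then some $v\succcurlyeq w$ has $\varphi\in\ell^+(v)$, $\psi\in\ell^-(v)$. A weak $\Sigma$-quasimodel adds $S\subseteq W\times W$ forward-confluent (if $w\preccurlyeq w'$, $w\,S\,v$ then some $v'\succcurlyeq v$ has $w'\,S\,v'$) and sensible ($w\,S\,v\Rightarrow\ell(w)\,S_T\,\ell(v)$);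 deterministic if $S$ is a function. A simulation from a $\Sigma$-labelled $\mathcal X$ to a $\Delta$-labelled $\mathcal Y$ ($\Sigma\subseteq\Delta$) is a forward-confluent $E\subseteq|\mathcal X|\times|\mathcal Y|$ (if $x\,E\,y$, $x\preccurlyeq x'$ then some $y'\succcurlyeq y$ has $x'\,E\,y'$) with $x\,E\,y\Rightarrow\ell(x)\subseteq_T\ell(y)$; $x\rightharpoonup y$ iff some simulation relates them; $E$ is dynamic if $x\,E\,y$ and $y\,S\,y'$ imply some $x'$ with $x\,S\,x'$, $x'\,E\,y'$; surjective if every point of $\mathcal A$ is in its range. $\mathrm{Sim}(w)$ for $w$ in a finite $\Sigma$-labelled frame is defined by backwards induction on $\prec$: $\mathrm{Sim}(w)=\bigwedge\ell^+(w)\to\big(\bigvee\ell^-(w)\vee\bigvee_{v\succ w}\mathrm{Sim}(v)\big)$ ($\bigwedge\varnothing=\top$, $\bigvee\varnothing=\bot$). *)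

From HB Require Import structures.
From mathcomp Require Import all_boot.
Set Implicit Arguments. Unset Strict Implicit. Unset Printing Implicit Defensive.

Inductive form : Type :=
| Var  : nat -> form
| Bot  : form
| And  : form -> form -> form
| Or   : form -> form -> form
| Imp  : form -> form -> form
| Next : form -> form
| Dia  : form -> form.

Definition form_eq_dec : forall x y : form, {x = y} + {x <> y}.
Proof. decide equality; exact: (eq_comparable _ _). Defined.

HB.instance Definition _ := hasDecEq.Build form (compareP form_eq_dec).

Definition Top : form := Imp Bot Bot.
Definition Neg (p : form) : form := Imp p Bot.

(* The intuitionistic tautologies are given by the standard schematic Hilbert
   axioms of IPC (all their instances over L_Diamond); together with modus ponens
   they generate exactly all substitution instances of intuitionistic tautologies. *)
Inductive prov : form -> Prop :=
| ax_K p q : prov (Imp p (Imp q p))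
| ax_S p q r : prov (Imp (Imp p (Imp q r)) (Imp (Imp p q) (Imp p r)))
| ax_andE1 p q : prov (Imp (And p q) p)
| ax_andE2 p q : prov (Imp (And p q) q)
| ax_andI p q : prov (Imp p (Imp q (And p q)))
| ax_orI1 p q : prov (Imp p (Or p q))
| ax_orI2 p q : prov (Imp q (Or p q))
| ax_orE p q r : prov (Imp (Imp p r) (Imp (Imp q r) (Imp (Or p q) r)))
| ax_efq p : prov (Imp Bot p)
| ax_next_bot : prov (Neg (Next Bot))
| ax_next_and p q : prov (Imp (And (Next p) (Next q)) (Next (And p q)))
| ax_next_or p q : prov (Imp (Next (Or p q)) (Or (Next p) (Next q)))
| ax_next_K p q : prov (Imp (Next (Imp p q)) (Imp (Next p) (Next q)))
| ax_dia_fix p : prov (Imp (Or p (Next (Dia p))) (Dia p))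
| r_mp p q : prov (Imp p q) -> prov p -> prov q
| r_nec p : prov p -> prov (Next p)
| r_dia_mono p q : prov (Imp p q) -> prov (Imp (Dia p) (Dia q))
| r_dia_ind p : prov (Imp (Next p) p) -> prov (Imp (Dia p) p).

Definition subf_closed (Sg : seq form) : Prop :=
  forall p, p \in Sg ->
    match p with
    | And a b | Or a b | Imp a b => a \in Sg /\ b \in Sg
    | Next a | Dia a => a \in Sg
    | _ => True
    end.

Record ty := Ty { tminus : pred form; tplus : pred form }.

Definition is_type (Sg : pred form) (t : ty) : Prop :=
  (forall p, ~~ (tminus t p && tplus t p)) /\
  (forall p, Sg p = (tminus t p || tplus t p)) /\
  ~~ tplus t Bot /\
  (forall p q, Sg (And p q) -> tplus t (And p q) = tplus t p && tplus t q) /\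
  (forall p q, Sg (Or p q) -> tplus t (Or p q) = tplus t p || tplus t q) /\
  (forall p q, tplus t (Imp p q) -> tminus t p || tplus t q) /\
  (forall p, tminus t (Dia p) -> tminus t p).

Definition subT (t u : ty) : Prop :=
  (forall p, tminus t p -> tminus u p) /\ (forall p, tplus t p -> tplus u p).

Definition ST (t u : ty) : Prop :=
  (forall p, tplus t (Next p) -> tplus u p) /\
  (forall p, tminus t (Next p) -> tminus u p) /\
  (forall p, tplus t (Dia p) -> tminus t p -> tplus u (Dia p)) /\
  (forall p, tminus t (Dia p) -> tminus u (Dia p)).

Definition is_labelled_frame (Sg : pred form) (W : Type)
    (le : W -> W -> Prop) (l : W -> ty) : Prop :=
  (forall w, le w w) /\
  (forall u v w, le u v -> le v w -> le u w) /\
  (forall u v, le u v -> le v u -> u = v) /\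
  (forall w, is_type Sg (l w)) /\
  (forall w v p, le w v -> tplus (l w) p -> tplus (l v) p) /\
  (forall w p q, tminus (l w) (Imp p q) ->
     exists v, le w v /\ tplus (l v) p /\ tminus (l v) q).

Definition forward_confluent (W : Type) (le S : W -> W -> Prop) : Prop :=
  forall w w' v, le w w' -> S w v -> exists v', le v v' /\ S w' v'.

Definition sensible (W : Type) (S : W -> W -> Prop) (l : W -> ty) : Prop :=
  forall w v, S w v -> ST (l w) (l v).

Definition is_weak_qm (Sg : pred form) (W : Type)
    (le S : W -> W -> Prop) (l : W -> ty) : Prop :=
  is_labelled_frame Sg le l /\ forward_confluent le S /\ sensible S l.

Definition deterministic (W : Type) (S : W -> W -> Prop) : Prop :=
  forall w, exists! v, S w v.

Definition is_simulation (X Y : Type) (leX : X -> X -> Prop) (lX : X -> ty)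
    (leY : Y -> Y -> Prop) (lY : Y -> ty) (E : X -> Y -> Prop) : Prop :=
  (forall x y x', E x y -> leX x x' -> exists y', leY y y' /\ E x' y') /\
  (forall x y, E x y -> subT (lX x) (lY y)).

Definition simulates (X Y : Type) (leX : X -> X -> Prop) (lX : X -> ty)
    (leY : Y -> Y -> Prop) (lY : Y -> ty) (x : X) (y : Y) : Prop :=
  exists E, is_simulation leX lX leY lY E /\ E x y.

Definition dynamic (X Y : Type) (SX : X -> X -> Prop) (SY : Y -> Y -> Prop)
    (E : X -> Y -> Prop) : Prop :=
  forall x y y', E x y -> SY y y' -> exists x', SX x x' /\ E x' y'.

Definition surjective_rel (X Y : Type) (E : X -> Y -> Prop) : Prop :=
  forall y, exists x, E x y.

Fixpoint bigAnd (s : seq form) : form :=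
  match s with
  | [::] => Top
  | [:: p] => p
  | p :: s' => And p (bigAnd s')
  end.

Fixpoint bigOr (s : seq form) : form :=
  match s with
  | [::] => Bot
  | [:: p] => p
  | p :: s' => Or p (bigOr s')
  end.

(* Backwards induction on the strict order, implemented with fuel; with fuel
   #|W| the base case is never reached for a partial order (chains have at most
   #|W| elements). *)
Fixpoint simF (Sg : seq form) (W : finType) (le : rel W) (l : W -> ty)
    (n : nat) (w : W) : form :=
  match n with
  | 0 => Bot
  | n'.+1 =>
      Imp (bigAnd [seq p <- Sg | tplus (l w) p])
          (bigOr ([seq p <- Sg | tminus (l w) p] ++
                  map (simF Sg le l n') [seq v <- enum W | (v != w) && le w v]))
  end.

Definition Sim (Sg : seq form) (W : finType) (le : rel W) (l : W -> ty)
    (w : W) : form :=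
  simF Sg le l #|W| w.

Definition possible (Sg : seq form) (W : finType) (le : rel W) (l : W -> ty)
    (w : W) : Prop :=
  ~ prov (Sim Sg le l w).

(** The canonical model (prime theories ordered by inclusion, the successor of
    [T] being [{p | T (Next p)}]) is a deterministic weak quasimodel, so the
    hypothesis applies to it.  Call a prime theory [D] a realization of [w] if it
    contains the positive part of the label of [w], omits its negative part, and
    omits [Sim v] for every [v] strictly above [w].  Unfolding [Sim], a prime
    theory omits [Sim w] iff some prime extension of it realizes [w]; with
    Lindenbaum's lemma, [w] is possible iff it has a realization.  A realization
    of [w] omits [Sim v] for all [v] above [w], which gives upward closure.
    Being a realization is a simulation into the canonical model, and
    conversely every point simulating a prime theory realizes it; so if [D]
    realizes [w], dynamicity yields [w S v] with [v] simulating, hence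
    realizing, the successor of [D], and [v] is possible. *)

From HB Require Import structures.
From mathcomp Require Import all_boot.
From Stdlib Require Import Classical ClassicalEpsilon.
From Stdlib Require Import FunctionalExtensionality PropExtensionality ProofIrrelevance.

Set Implicit Arguments. Unset Strict Implicit. Unset Printing Implicit Defensive.

(** * The Hilbert calculus *)

Lemma prov_imp_refl p : prov (Imp p p).
Proof. exact: r_mp (r_mp (ax_S p (Imp p p) p) (ax_K p (Imp p p))) (ax_K p p). Qed.

Lemma prov_imp_trans p q r : prov (Imp p q) -> prov (Imp q r) -> prov (Imp p r).
Proof.
move=> pq qr; have p_qr : prov (Imp p (Imp q r)) by exact: r_mp (ax_K _ _) qr.
exact: r_mp (r_mp (ax_S p q r) p_qr) pq.
Qed.

Lemma prov_or_elim p q r : prov (Imp p r) -> prov (Imp q r) -> prov (Imp (Or p q) r).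
Proof. by move=> pr qr; exact: r_mp (r_mp (ax_orE p q r) pr) qr. Qed.

Lemma prov_next_mono p q : prov (Imp p q) -> prov (Imp (Next p) (Next q)).
Proof. by move=> pq; exact: r_mp (ax_next_K p q) (r_nec pq). Qed.

Lemma prov_dia_intro p : prov (Imp p (Dia p)).
Proof. exact: prov_imp_trans (ax_orI1 _ _) (ax_dia_fix p). Qed.

Lemma prov_next_dia p : prov (Imp (Next (Dia p)) (Dia p)).
Proof. exact: prov_imp_trans (ax_orI2 _ _) (ax_dia_fix p). Qed.

(* The induction rule applied to [p \/ Next (Dia p)], which is closed under [Next]. *)
Lemma prov_dia_unfold p : prov (Imp (Dia p) (Or p (Next (Dia p)))).
Proof.
set u := Or p (Next (Dia p)).
have u_next_closed : prov (Imp (Next u) u).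
  apply: prov_imp_trans (ax_next_or _ _) _; apply: prov_imp_trans (ax_orI2 p _).
  by apply: prov_or_elim; apply: prov_next_mono; [exact: prov_dia_intro|exact: prov_next_dia].
exact: prov_imp_trans (r_dia_mono (ax_orI1 p (Next (Dia p)))) (r_dia_ind u_next_closed).
Qed.

Inductive derivable (G : form -> Prop) : form -> Prop :=
| der_prov p : prov p -> derivable G p
| der_hyp p : G p -> derivable G p
| der_mp p q : derivable G (Imp p q) -> derivable G p -> derivable G q.

Definition included (G D : form -> Prop) := forall p, G p -> D p.

Lemma derivable_mono G D p : included G D -> derivable G p -> derivable D p.
Proof.
move=> GD; elim=> {p} [p ?|p ?|p q _ IHpq _ IHp].
- exact: der_prov.
- exact/der_hyp/GD.
- exact: der_mp IHpq IHp.
Qed.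

Lemma prov_derivable_empty p : derivable (fun _ => False) p -> prov p.
Proof. by elim=> {p} [p|p|p q _ pq _ Hp] //; exact: r_mp pq Hp. Qed.

Lemma derivable_deduction G a q :
  derivable (fun x => G x \/ x = a) q -> derivable G (Imp a q).
Proof.
elim=> {q} [p Hp|p [Gp| ->]|p q _ IHpq _ IHp].
- exact: der_mp (der_prov _ (ax_K p a)) (der_prov _ Hp).
- exact: der_mp (der_prov _ (ax_K p a)) (der_hyp Gp).
- exact: der_prov (prov_imp_refl a).
- exact: der_mp (der_mp (der_prov _ (ax_S a p q)) IHpq) IHp.
Qed.

(** * Prime theories and Lindenbaum's lemma *)

Definition prime_theory (T : form -> Prop) :=
  [/\ (forall p, prov p -> T p), (forall p q, T (Imp p q) -> T p -> T q),
      ~ T Bot & (forall p q, T (Or p q) -> T p \/ T q)].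

Lemma prime_theory_derivable T p : prime_theory T -> derivable T p -> T p.
Proof.
by case=> T_prov T_mp _ _; elim=> {p} [p /T_prov|p|p q _ Tpq _ Tp] //; exact: T_mp Tpq Tp.
Qed.

Lemma prime_theory_unprovable T p : prime_theory T -> ~ T p -> ~ prov p.
Proof. by case=> T_prov _ _ _ nTp /T_prov. Qed.

Fixpoint form_to_tree (f : form) : GenTree.tree nat :=
  match f with
  | Var n => GenTree.Leaf n
  | Bot => GenTree.Node 0 [::]
  | And a b => GenTree.Node 1 [:: form_to_tree a; form_to_tree b]
  | Or a b => GenTree.Node 2 [:: form_to_tree a; form_to_tree b]
  | Imp a b => GenTree.Node 3 [:: form_to_tree a; form_to_tree b]
  | Next a => GenTree.Node 4 [:: form_to_tree a]
  | Dia a => GenTree.Node 5 [:: form_to_tree a]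
  end.

Fixpoint form_of_tree (t : GenTree.tree nat) : option form :=
  match t with
  | GenTree.Leaf n => Some (Var n)
  | GenTree.Node 0 [::] => Some Bot
  | GenTree.Node 1 [:: a; b] => obind (fun x => omap (And x) (form_of_tree b)) (form_of_tree a)
  | GenTree.Node 2 [:: a; b] => obind (fun x => omap (Or x) (form_of_tree b)) (form_of_tree a)
  | GenTree.Node 3 [:: a; b] => obind (fun x => omap (Imp x) (form_of_tree b)) (form_of_tree a)
  | GenTree.Node 4 [:: a] => omap Next (form_of_tree a)
  | GenTree.Node 5 [:: a] => omap Dia (form_of_tree a)
  | _ => None
  end.

Lemma form_to_treeK : pcancel form_to_tree form_of_tree.
Proof. by elim=> //= [a -> b ->|a -> b ->|a -> b ->|a ->|a ->]. Qed.

HB.instance Definition _ := PCanHasChoice form_to_treeK.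
HB.instance Definition _ := PCanIsCountable form_to_treeK.

Definition nth_form (n : nat) : form := odflt Bot (unpickle n).

Lemma nth_form_pickle p : nth_form (pickle p) = p.
Proof. by rewrite /nth_form pickleK. Qed.

Fixpoint lindenbaum_chain (G : form -> Prop) (q : form) (n : nat) : form -> Prop :=
  match n with
  | 0 => G
  | n'.+1 =>
      let G' := lindenbaum_chain G q n' in
      fun x => G' x \/
        (x = nth_form n' /\ ~ derivable (fun y => G' y \/ y = nth_form n') q)
  end.

Section Lindenbaum.
Variables (G : form -> Prop) (q : form).
Hypothesis G_q : ~ derivable G q.

Let chain := lindenbaum_chain G q.
Let limit x := exists n, chain n x.

Lemma lindenbaum_chain_mono n m : n <= m -> included (chain n) (chain m).
Proof. by move=> /subnK <- x; elim: (m - n) => [|k IHk] //= Hx; left; exact: IHk. Qed.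

Lemma lindenbaum_chain_underivable n : ~ derivable (chain n) q.
Proof.
elim: n => [|n IHn] //=; set G' := chain n.
case: (classic (derivable (fun y => G' y \/ y = nth_form n) q)) => [Hd|Hn].
- by apply: contra_not IHn; apply: derivable_mono => x [|[_ /(_ Hd)]].
- by apply: contra_not Hn; apply: derivable_mono => x [|[]]; [left|right].
Qed.

Lemma derivable_lindenbaum_limit p : derivable limit p -> exists n, derivable (chain n) p.
Proof.
elim=> {p} [p ?|p [n ?]|p r _ [n1 IH1] _ [n2 IH2]].
- by exists 0; apply: der_prov.
- by exists n; apply: der_hyp.
- exists (maxn n1 n2); apply: der_mp.
  + exact: derivable_mono (lindenbaum_chain_mono (leq_maxl n1 n2)) IH1.
  + exact: derivable_mono (lindenbaum_chain_mono (leq_maxr n1 n2)) IH2.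
Qed.

Lemma lindenbaum : exists T, [/\ prime_theory T, included G T & ~ T q].
Proof.
have limit_q : ~ derivable limit q.
  by case/derivable_lindenbaum_limit => n; exact: lindenbaum_chain_underivable.
have outside_imp x : ~ limit x -> derivable limit (Imp x q).
  have [n <-] : exists n, nth_form n = x by exists (pickle x); exact: nth_form_pickle.
  move=> nx.
  case: (classic (derivable (fun y => chain n y \/ y = nth_form n) q)) => [Hq|Hq].
  - by apply: derivable_deduction; apply: derivable_mono Hq => y [Hy|->]; [left; exists n|right].
  - by case: nx; exists n.+1; right.
have limit_closed p : derivable limit p -> limit p.
  by move=> Hp; apply: NNPP => np; apply: limit_q; exact: der_mp (outside_imp _ np) Hp.
exists limit; split; first split.
- by move=> p /der_prov/limit_closed.
- by move=> p r Hpr Hp; apply: limit_closed; exact: der_mp (der_hyp Hpr) (der_hyp Hp).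
- by move=> Hb; apply: limit_q; exact: der_mp (der_prov _ (ax_efq q)) (der_hyp Hb).
- move=> p r Hpr; apply: NNPP => /not_or_and [np nr]; apply: limit_q.
  apply: der_mp (der_hyp Hpr).
  exact: der_mp (der_mp (der_prov _ (ax_orE p r q)) (outside_imp _ np)) (outside_imp _ nr).
- by move=> x Gx; exists 0.
- by move=> Hq; apply: limit_q; apply: der_hyp.
Qed.

End Lindenbaum.

Section PrimeTheory.
Variable T : form -> Prop.
Hypothesis T_prime : prime_theory T.

Let T_prov : forall p, prov p -> T p. Proof. by case: T_prime. Qed.
Let T_mp : forall p q, T (Imp p q) -> T p -> T q. Proof. by case: T_prime. Qed.

Lemma prime_theory_imp_mono {p q} : prov (Imp p q) -> T p -> T q.
Proof. by move/T_prov/T_mp. Qed.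

Lemma prime_theory_And p q : T (And p q) <-> T p /\ T q.
Proof.
split=> [Hpq|[Hp Hq]]; last exact: T_mp (prime_theory_imp_mono (ax_andI p q) Hp) Hq.
by split; apply: prime_theory_imp_mono Hpq; [exact: ax_andE1|exact: ax_andE2].
Qed.

Lemma prime_theory_Or p q : T (Or p q) <-> T p \/ T q.
Proof.
split=> [|[]].
- by case: T_prime => _ _ _; apply.
- exact: prime_theory_imp_mono (ax_orI1 p q).
- exact: prime_theory_imp_mono (ax_orI2 p q).
Qed.

Lemma prime_theory_bigAnd s : T (bigAnd s) <-> forall p, p \in s -> T p.
Proof.
elim: s => [|p s IHs]; first by split=> // _; exact/T_prov/prov_imp_refl.
case: s IHs => [|r s] IHs.
  by split=> [Tp x /[!inE] /eqP ->|]; last apply; rewrite ?inE.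
rewrite [bigAnd _]/= -/(bigAnd (r :: s)) prime_theory_And IHs.
split=> [[Tp Ts] x /[1!in_cons] /orP[/eqP ->|/Ts]|Hs] //.
by split=> [|x Hx]; apply: Hs; rewrite in_cons ?eqxx ?Hx ?orbT.
Qed.

Lemma prime_theory_bigOr s : T (bigOr s) <-> exists2 p, p \in s & T p.
Proof.
elim: s => [|p s IHs]; first by split=> [|[]//]; case: T_prime.
case: s IHs => [|r s] IHs.
  by split=> [Tp|[x /[!inE] /eqP ->]//]; exists p; rewrite ?inE.
rewrite [bigOr _]/= -/(bigOr (r :: s)) prime_theory_Or IHs.
split=> [[Tp|[x Hx Tx]]|[x /[1!in_cons] /orP[/eqP ->|Hx] Tx]].
- by exists p; rewrite ?in_cons ?eqxx.
- by exists x; rewrite // in_cons Hx orbT.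
- by left.
- by right; exists x.
Qed.

Lemma prime_theory_extend_imp p q : ~ T (Imp p q) ->
  exists D, [/\ prime_theory D, included T D, D p & ~ D q].
Proof.
move=> nTpq; have [|D [D_prime TpD nDq]] := @lindenbaum (fun x => T x \/ x = p) q.
  by move/derivable_deduction/(prime_theory_derivable T_prime).
by exists D; split=> // [x Tx|]; apply: TpD; [left|right].
Qed.

Lemma prime_theory_next : prime_theory (fun p => T (Next p)).
Proof.
case: T_prime => _ _ T_bot T_or; split.
- by move=> p /r_nec/T_prov.
- by move=> p q /(prime_theory_imp_mono (ax_next_K p q))/T_mp.
- by move/(prime_theory_imp_mono ax_next_bot).
- by move=> p q /(prime_theory_imp_mono (ax_next_or p q))/T_or.
Qed.

End PrimeTheory.

(** * The canonical model *)

Definition canon := {T : form -> Prop | prime_theory T}.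

Definition canon_le (G D : canon) : Prop := included (sval G) (sval D).

Definition canon_next (G D : canon) : Prop := forall p, sval D p <-> sval G (Next p).

Definition canon_succ (G : canon) : canon := exist _ _ (prime_theory_next (svalP G)).

Definition truth (P : Prop) : bool := if excluded_middle_informative P then true else false.

Lemma truthP P : reflect P (truth P).
Proof. by rewrite /truth; case: excluded_middle_informative => H; constructor. Qed.

Definition canon_label (G : canon) : ty :=
  Ty (fun p => ~~ truth (sval G p)) (fun p => truth (sval G p)).

Lemma canon_plus G p : tplus (canon_label G) p <-> sval G p.
Proof. by split=> /truthP. Qed.

Lemma canon_minus G p : tminus (canon_label G) p <-> ~ sval G p.
Proof. by split=> [/negP nP /truthP|nP]; last apply/negP => /truthP. Qed.

Lemma canon_ext (G D : canon) : (forall p, sval G p <-> sval D p) -> G = D.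
Proof.
case: G D => [T T_prime] [D D_prime] /= TD.
have eTD : T = D by apply: functional_extensionality => p; exact: propositional_extensionality.
by subst D; congr exist; exact: proof_irrelevance.
Qed.

Lemma canon_next_succ G : canon_next G (canon_succ G).
Proof. by []. Qed.

Lemma canon_deterministic : deterministic canon_next.
Proof.
move=> G; exists (canon_succ G); split=> // D GD.
by apply: canon_ext => p; rewrite GD.
Qed.

Lemma canon_label_type G : is_type (fun _ => true) (canon_label G).
Proof.
case: G => T T_prime; have [_ T_mp T_bot _] := T_prime; rewrite /canon_label /=.
split; [|split; [|split; [|split; [|split; [|split]]]]].
- by move=> p; rewrite andNb.
- by move=> p; rewrite orNb.
- by apply/negP => /truthP.
- move=> p q _ /=; apply/truthP/andP; rewrite prime_theory_And //.
  + by case=> Tp Tq; split; apply/truthP.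
  + by case=> /truthP Tp /truthP Tq.
- move=> p q _ /=; apply/truthP/orP; rewrite prime_theory_Or //.
  + by case=> [Tp|Tq]; [left|right]; apply/truthP.
  + by case=> /truthP; [left|right].
- move=> p q /= /truthP Tpq; case: (truthP (T p)) => //= Tp.
  by apply/truthP; exact: T_mp Tpq Tp.
- move=> p /=; apply: contra => /truthP Tp; apply/truthP.
  exact: (prime_theory_imp_mono T_prime (prov_dia_intro p) Tp).
Qed.

Lemma canon_labelled_frame : is_labelled_frame (fun _ => true) canon_le canon_label.
Proof.
split; [|split; [|split; [|split; [|split]]]].
- by move=> G p.
- by move=> G1 G2 G3 G12 G23 p /G12/G23.
- by move=> G D GD DG; apply: canon_ext => p; split; [exact: GD|exact: DG].
- exact: canon_label_type.
- by move=> G D p GD /canon_plus/GD Dp; apply/canon_plus.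
- move=> [T T_prime] p q /canon_minus /= nTpq.
  have [D [D_prime TD Dp nDq]] := prime_theory_extend_imp T_prime nTpq.
  by exists (exist _ D D_prime); split=> //; split; [exact/canon_plus|exact/canon_minus].
Qed.

Lemma canon_forward_confluent : forward_confluent canon_le canon_next.
Proof. by move=> G G' D GG' GD; exists (canon_succ G'); split=> // p /GD /GG'. Qed.

Lemma canon_sensible : sensible canon_next canon_label.
Proof.
move=> G D GD; have G_prime := svalP G; split; [|split; [|split]].
- by move=> p /canon_plus /GD Dp; apply/canon_plus.
- by move=> p /canon_minus nGp; apply/canon_minus => /GD.
- move=> p /canon_plus Gdp /canon_minus nGp; apply/canon_plus; apply/GD.
  by have /(prime_theory_Or G_prime) [] := prime_theory_imp_mono G_prime (prov_dia_unfold p) Gdp.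
- move=> p /canon_minus nGdp; apply/canon_minus => /GD Gndp; apply: nGdp.
  exact: (prime_theory_imp_mono G_prime (prov_next_dia p) Gndp).
Qed.

Lemma canon_weak_qm : is_weak_qm (fun _ => true) canon_le canon_next canon_label.
Proof.
split; first exact: canon_labelled_frame.
by split; [exact: canon_forward_confluent|exact: canon_sensible].
Qed.

(** * Realizations of the points of a finite frame *)

Section Realization.
Variables (Sg : seq form) (W : finType) (le : rel W) (l : W -> ty).
Hypothesis le_trans : forall u v w, le u v -> le v w -> le u w.
Hypothesis le_anti : forall u v, le u v -> le v u -> u = v.
Hypothesis l_type : forall w, is_type (fun p => p \in Sg) (l w).

Definition num_above (x : W) := #|[pred u | (u != x) && le x u]|.

Lemma num_above_lt x v : le x v -> v != x -> num_above v < num_above x.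
Proof.
move=> xv vx; apply/proper_card/properP; split.
- apply/subsetP => u /[!inE] /andP [uv vu]; rewrite (le_trans xv vu) andbT.
  by apply: contraNneq uv => ux; rewrite ux in vu *; rewrite (le_anti xv vu).
- by exists v; rewrite !inE ?vx ?xv ?eqxx.
Qed.

Lemma num_above_lt_card x : num_above x < #|W|.
Proof.
apply/proper_card/properP; split; first exact/subsetP.
by exists x; rewrite !inE ?eqxx.
Qed.

Lemma tplus_in_Sg w p : tplus (l w) p -> p \in Sg.
Proof. by have [_ [Sg_part _]] := l_type w; rewrite Sg_part => ->; rewrite orbT. Qed.

Lemma tminus_in_Sg w p : tminus (l w) p -> p \in Sg.
Proof. by have [_ [Sg_part _]] := l_type w; rewrite Sg_part => ->. Qed.

Definition realizes (s : W -> form) (x : W) (D : form -> Prop) :=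
  [/\ forall p, tplus (l x) p -> D p, forall p, tminus (l x) p -> ~ D p &
      forall v, v != x -> le x v -> ~ D (s v)].

Lemma realizes_ext s s' x D :
  (forall v, v != x -> le x v -> D (s v) <-> D (s' v)) -> realizes s x D -> realizes s' x D.
Proof. by move=> ss' [Dplus Dminus Dsucc]; split=> // v vx xv /(ss' v vx xv); apply: Dsucc. Qed.

Lemma prime_notin_simF n x T : prime_theory T ->
  ~ T (simF Sg le l n.+1 x) <->
  exists D, [/\ prime_theory D, included T D & realizes (simF Sg le l n) x D].
Proof.
move=> T_prime; rewrite [simF _ _ _ n.+1 x]/=; split.
- case/(prime_theory_extend_imp T_prime) => D [D_prime TD DA nDB].
  exists D; split=> //; split=> [p Hp|p Hp Dp|v vx xv Dv].
  + by move/(prime_theory_bigAnd D_prime): DA; apply; rewrite mem_filter Hp (tplus_in_Sg Hp).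
  + apply: nDB; apply/(prime_theory_bigOr D_prime); exists p => //.
    by rewrite mem_cat mem_filter Hp (tminus_in_Sg Hp).
  + apply: nDB; apply/(prime_theory_bigOr D_prime); exists (simF Sg le l n v) => //.
    by rewrite mem_cat; apply/orP; right; apply: map_f; rewrite mem_filter mem_enum vx xv.
- move=> [D [D_prime TD [Dplus Dminus Dsucc]]] /TD TAB; have [_ D_mp _ _] := D_prime.
  have DA : D (bigAnd [seq p <- Sg | tplus (l x) p]).
    by apply/(prime_theory_bigAnd D_prime) => p; rewrite mem_filter => /andP [/Dplus].
  have /(prime_theory_bigOr D_prime) [p] := D_mp _ _ TAB DA.
  rewrite mem_cat => /orP [|/mapP [v]].
  + by rewrite mem_filter => /andP [/Dminus].
  + by rewrite mem_filter mem_enum andbT => /andP [vx xv] ->; apply: Dsucc.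
Qed.

Lemma simF_fuel m m' x T : prime_theory T -> num_above x < m -> num_above x < m' ->
  T (simF Sg le l m x) <-> T (simF Sg le l m' x).
Proof.
have [k] : exists k, num_above x < k by exists (num_above x).+1.
elim: k x m m' T => [//|k IHk] x [//|m] [//|m'] T xk T_prime xm xm'.
have fuel v D : prime_theory D -> v != x -> le x v ->
    D (simF Sg le l m v) <-> D (simF Sg le l m' v).
  move=> D_prime vx xv; have vx_lt := num_above_lt xv vx.
  by apply: IHk => //; apply: leq_trans vx_lt _; rewrite -ltnS.
suff notin_iff : ~ T (simF Sg le l m.+1 x) <-> ~ T (simF Sg le l m'.+1 x).
  by split=> TS; apply: NNPP => nTS; [move/notin_iff: nTS | move/notin_iff: nTS].
rewrite !prime_notin_simF //; split=> -[D [D_prime TD Dreal]]; exists D; split=> //.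
- by apply: realizes_ext Dreal => v vx xv; exact: fuel.
- by apply: realizes_ext Dreal => v vx xv; exact: iff_sym (fuel _ _ D_prime vx xv).
Qed.

Lemma prime_notin_Sim x T : prime_theory T ->
  ~ T (Sim Sg le l x) <->
  exists D, [/\ prime_theory D, included T D & realizes (Sim Sg le l) x D].
Proof.
move=> T_prime; have x_card := num_above_lt_card x.
have [n eW] : exists n, #|W| = n.+1.
  by exists #|W|.-1; rewrite prednK // (leq_ltn_trans (leq0n _) x_card).
have fuel v D : prime_theory D -> v != x -> le x v ->
    D (simF Sg le l n v) <-> D (Sim Sg le l v).
  move=> D_prime vx xv; apply: simF_fuel => //; last exact: num_above_lt_card.
  by move: x_card; rewrite eW ltnS; apply: leq_trans (num_above_lt xv vx).
rewrite {1}/Sim eW prime_notin_simF //.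
split=> -[D [D_prime TD Dreal]]; exists D; split=> //.
- by apply: realizes_ext Dreal => v vx xv; exact: fuel.
- by apply: realizes_ext Dreal => v vx xv; exact: iff_sym (fuel _ _ D_prime vx xv).
Qed.

Lemma realizes_notin_Sim x D :
  prime_theory D -> realizes (Sim Sg le l) x D -> ~ D (Sim Sg le l x).
Proof. by move=> D_prime Dreal; apply/(prime_notin_Sim x D_prime); exists D; split=> // p. Qed.

Lemma realizes_possible x D : prime_theory D -> realizes (Sim Sg le l) x D -> possible Sg le l x.
Proof. by move=> D_prime /(realizes_notin_Sim D_prime); exact: prime_theory_unprovable. Qed.

Lemma possible_realizes x :
  possible Sg le l x -> exists D, prime_theory D /\ realizes (Sim Sg le l) x D.
Proof.
move=> x_possible; have [|T [T_prime _ nT]] := @lindenbaum (fun _ => False) (Sim Sg le l x).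
  by move/prov_derivable_empty.
by have [D [D_prime _ Dreal]] := (prime_notin_Sim x T_prime).1 nT; exists D.
Qed.

Lemma possible_up w v : possible Sg le l w -> le w v -> possible Sg le l v.
Proof.
move=> w_possible wv; case: (eqVneq v w) => [-> //|vw].
have [D [D_prime [_ _ Dsucc]]] := possible_realizes w_possible.
exact: prime_theory_unprovable D_prime (Dsucc v vw wv).
Qed.

Lemma simulation_realizes (E : W -> canon -> Prop) x G :
  is_simulation (fun x y => le x y) l canon_le canon_label E -> E x G ->
  realizes (Sim Sg le l) x (sval G).
Proof.
move=> [E_conf E_sub]; have [k] : exists k, num_above x < k by exists (num_above x).+1.
elim: k x G => [//|k IHk] x G xk xG; have [E_minus E_plus] := E_sub _ _ xG.
split=> [p /E_plus/canon_plus|p /E_minus/canon_minus|v vx xv Gv] //.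
have [G' [GG' vG']] := E_conf _ _ _ xG xv.
have vk : num_above v < k by rewrite ltnS in xk; exact: leq_trans (num_above_lt xv vx) xk.
exact: realizes_notin_Sim (svalP G') (IHk v G' vk vG') (GG' _ Gv).
Qed.

Lemma realizes_simulation : is_simulation (fun x y => le x y) l canon_le canon_label
  (fun x G => realizes (Sim Sg le l) x (sval G)).
Proof.
split=> [x G x' [Gplus Gminus Gsucc] xx'|x G [Gplus Gminus _]].
- case: (eqVneq x' x) => [-> |x'x]; first by exists G; split=> [p|]; last split.
  have [D [D_prime GD Dreal]] := (prime_notin_Sim x' (svalP G)).1 (Gsucc x' x'x xx').
  by exists (exist _ D D_prime).
- by split=> p; [move/Gminus => nGp; apply/canon_minus|move/Gplus => Gp; apply/canon_plus].
Qed.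

End Realization.

Theorem lemma6p3 (Sg : seq form) (W : finType) (leI : rel W)
    (SI : W -> W -> Prop) (lI : W -> ty) :
  subf_closed Sg ->
  is_weak_qm (fun p => p \in Sg) (fun x y => leI x y) SI lI ->
  (forall (A : Type) (leA SA : A -> A -> Prop) (lA : A -> ty),
     is_weak_qm (fun _ => true) leA SA lA ->
     deterministic SA ->
     is_simulation (fun x y => leI x y) lI leA lA
       (simulates (fun x y => leI x y) lI leA lA) /\
     dynamic SI SA (simulates (fun x y => leI x y) lI leA lA) /\
     surjective_rel (simulates (fun x y => leI x y) lI leA lA)) ->
  (forall w v, possible Sg leI lI w -> leI w v -> possible Sg leI lI v) /\
  (forall w, possible Sg leI lI w -> exists v, possible Sg leI lI v /\ SI w v).
Proof.
move=> _ [[_ [le_trans [le_anti [l_type _]]]] _] canon_simulation.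
split=> [w v|w]; first exact: possible_up.
case/(possible_realizes le_trans le_anti l_type) => D [D_prime Dreal].
pose G : canon := exist _ D D_prime.
have wG : simulates (fun x y => leI x y) lI canon_le canon_label w G.
  by eexists; split; first exact: (realizes_simulation le_trans le_anti l_type).
have [_ [dyn _]] := canon_simulation _ _ _ _ canon_weak_qm canon_deterministic.
have [v [wv [E [E_sim vG']]]] := dyn w G (canon_succ G) wG (canon_next_succ G).
exists v; split=> //.
exact: realizes_possible (svalP _) (simulation_realizes le_trans le_anti l_type E_sim vG').
Qed.
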